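(* Let $G$ be a finite group and $\alpha\in\mathbb{Z}_{\ge0}$. (i) If $(A,M)$ is a NIM-rep of the near-group fusion ring $K(G,\alpha)$ such that $M$ is a single $G$-orbit, then there are a subgroup $H\le G$ with $M\cong G/H$ as $G$-sets, and a positive integer $c$ such that $X\vartriangleright m=c\sum_{m'\in M}m'$ for all $m\in M$, and these satisfy $\alpha=c\,[G:H]-\frac{|H|}{c}$, $c$ divides $|H|$, and $c^2[G:H]\ge|H|$. (ii) Conversely, for every subgroup $H\le G$ and positive integer $c$ satisfying $\alpha=c[G:H]-|H|/c$, $c\mid|H|$ and $c^2[G:H]\ge|H|$, the free $\mathbb{Z}$-module with basis $M=\{m_{xH}: xH\in G/H\}$, with $g\vartriangleright m_{xH}=m_{gxH}$ and $X\vartriangleright m=c\sum_{m'\in M}m'$, is a NIM-rep of $K(G,\alpha)$ consisting of one $G$-orbit. Thus one-orbit NIM-reps of $K(G,\alpha)$ are parametrised by such pairs $(H,c)$.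
   Context: The near-group fusion ring $K(G,\alpha)$ is the free $\mathbb{Z}$-module with basis $G\cup\{X\}$, with multiplication given by the group law on $G$, $gX=Xg=X$ for $g\in G$, and $X^2=\sum_{g\in G}g+\alpha X$; the involution is $g^*=g^{-1}$, $X^*=X$. A NIM-rep of a fusion ring $(R,B)$ is a nonzero left $R$-module $A$ which is a free $\mathbb{Z}$-module with a fixed basis $M$, such that each $b\vartriangleright m$ ($b\in B$, $m\in M$) is a non-negative integer combination of elements of $M$, and such that for the symmetric bilinear form with $(m,m')=\delta_{m,m'}$ on $M$, $(b\vartriangleright m,m')=(m,b^*\vartriangleright m')$. For NIM-reps of $K(G,\alpha)$ each $g\in G$ permutes $M$, giving a $G$-action on $M$. *)

From HB Require Import structures.
From mathcomp Require Import all_boot all_order all_fingroup all_algebra.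
Set Implicit Arguments. Unset Strict Implicit. Unset Printing Implicit Defensive.
Import GRing.Theory Num.Theory.

(* Basis of the near-group fusion ring K(G,alpha), G = the whole finite group gT:
   [Some g] is the basis element g, [None] is X. *)
Section NearGroup.
Variable gT : finGroupType.

(* Structure constants: b1 * b2 = sum_b ngcoef alpha b1 b2 b * b. *)
Definition ngcoef (alpha : nat) (b1 b2 b : option gT) : nat :=
  match b1, b2 with
  | Some g, Some h => nat_of_bool (b == Some (g * h)%g)
  | Some _, None | None, Some _ => nat_of_bool (b == None)
  | None, None => if b is Some _ then 1 else alpha
  end.

Definition ngdual (b : option gT) : option gT :=
  match b with Some g => Some g^-1%g | None => None end.

(* A based module with finite basis M: N b m m' is the coefficient of m' in b |> m
   (non-negativity is built in by taking values in nat). *)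
Definition is_NIMrep (alpha : nat) (M : finType) (N : option gT -> M -> M -> nat) : Prop :=
  [/\ 0 < #|M|,
      (forall m m', N (Some 1%g) m m' = nat_of_bool (m == m')),
      (forall b1 b2 m m',
          \sum_(m'' : M) N b2 m m'' * N b1 m'' m' =
          \sum_(b : option gT) ngcoef alpha b1 b2 b * N b m m')
    & (forall b m m', N b m m' = N (ngdual b) m' m)].

Definition one_orbit (M : finType) (N : option gT -> M -> M -> nat) : Prop :=
  forall m m' : M, exists g : gT, 0 < N (Some g) m m'.

Definition cosetM (H : {group gT}) : finType :=
  {C : {set gT} | C \in lcosets H [set: gT]}.

Definition cosetN (H : {group gT}) (c : nat) (b : option gT) (m m' : cosetM H) : nat :=
  match b with
  | Some g => nat_of_bool (val m' == (g *: val m)%g)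
  | None => c
  end.

End NearGroup.

From mathcomp Require Import all_boot all_order all_fingroup all_algebra.
From mathcomp Require Import ring.
Import GRing.Theory Num.Theory.

Set Implicit Arguments. Unset Strict Implicit. Unset Printing Implicit Defensive.

(* In a NIM-rep the matrix of g is non-negative with transpose the matrix of
   g^-1, and their product is the identity; so each row is a single 1 and G
   acts on M by permutations.  The relations gX = Xg = X make the matrix of X
   invariant under this action on both sides, hence constant (= c) on a single
   orbit M = G/H.  The (m0, m0) entry of X^2 = \sum_g g + alpha X then reads
   [G:H] c^2 = alpha c + |H|, which is the stated equation and forces c | |H|
   and |H| <= c^2 [G:H].  Conversely, that equation is all that is needed for
   the permutation action on G/H, with every entry of X equal to c, to be a
   NIM-rep. *)

Lemma big_option (R : Type) (idx : R) (op : Monoid.com_law idx)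
    (T : finType) (F : option T -> R) :
  \big[op/idx]_(b : option T) F b = op (F None) (\big[op/idx]_(x : T) F (Some x)).
Proof.
rewrite (bigD1 None) //= (reindex_omap Some id) => [|[x|] //].
by rewrite (eq_bigl xpredT) // => x; rewrite eqxx.
Qed.

Lemma sum_sqr_eq1 (I : finType) (a : I -> nat) :
  \sum_i a i * a i = 1 -> exists j, forall i, a i = (i == j).
Proof.
have [j aj_gt0 | a0] := pickP (fun i => 0 < a i); last first.
  by rewrite big1 // => i _; have := a0 i; rewrite lt0n => /negbFE/eqP ->.
rewrite (bigD1 j) //= => sum1; exists j.
have aj1 : a j = 1.
  by move: sum1 aj_gt0; case: (a j) => [|[|k]] //; rewrite mulSn addSn.
move: sum1; rewrite aj1 => /eqP; rewrite eqSS sum_nat_eq0 => /forallP a0 i.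
have [-> // | ne_ij] := eqVneq i j.
by have /implyP/(_ ne_ij) := a0 i; rewrite muln_eq0 orbb => /eqP.
Qed.

Section NearGroupCoefficients.
Variables (gT : finGroupType) (alpha : nat).

Lemma sum_ngcoef (b1 b2 : option gT) (F : option gT -> nat) :
  \sum_b ngcoef alpha b1 b2 b * F b =
  match b1, b2 with
  | Some g, Some h => F (Some (g * h)%g)
  | None, None => alpha * F None + \sum_g F (Some g)
  | _, _ => F None
  end.
Proof.
have sum_delta b0 : \sum_b (b == b0) * F b = F b0.
  by rewrite (bigD1 b0) //= eqxx mul1n big1 ?addn0 // => b /negbTE ->.
case: b1 b2 => [g|] [h|] //=; rewrite ?sum_delta // big_option.
by under eq_bigr do rewrite mul1n.
Qed.

End NearGroupCoefficients.

Section NIMrepAction.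
Variables (gT : finGroupType) (alpha : nat) (M : finType).
Variable N : option gT -> M -> M -> nat.
Hypothesis NIM : is_NIMrep alpha N.
Implicit Types (g h : gT) (m : M).

Let N1 m m' : N (Some 1%g) m m' = (m == m'). Proof. by case: NIM. Qed.
Let Nmul b1 b2 m m' :
  \sum_m'' N b2 m m'' * N b1 m'' m' = \sum_b ngcoef alpha b1 b2 b * N b m m'.
Proof. by case: NIM. Qed.
Let Ndual b m m' : N b m m' = N (ngdual b) m' m. Proof. by case: NIM. Qed.

Lemma N_mulGG g h m m' :
  \sum_m'' N (Some h) m m'' * N (Some g) m'' m' = N (Some (g * h)%g) m m'.
Proof. by rewrite Nmul sum_ngcoef. Qed.

Lemma N_mulXG g m m' : \sum_m'' N None m m'' * N (Some g) m'' m' = N None m m'.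
Proof. by rewrite Nmul sum_ngcoef. Qed.

Lemma N_mulGX g m m' : \sum_m'' N (Some g) m m'' * N None m'' m' = N None m m'.
Proof. by rewrite Nmul sum_ngcoef. Qed.

Lemma N_mulXX m m' :
  \sum_m'' N None m m'' * N None m'' m' = alpha * N None m m' + \sum_g N (Some g) m m'.
Proof. by rewrite Nmul sum_ngcoef. Qed.

Definition nim_act g m : M := odflt m [pick m' | 0 < N (Some g) m m'].

Lemma nim_actE g m m' : N (Some g) m m' = (m' == nim_act g m).
Proof.
have [j Nj] : exists j, forall i, N (Some g) m i = (i == j).
  apply: sum_sqr_eq1; have <- : N (Some 1%g) m m = 1 by rewrite N1 eqxx.
  rewrite -(mulVg g) -N_mulGG.
  by apply: eq_bigr => i _; rewrite [in X in _ * X]Ndual.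
suff -> : nim_act g m = j by rewrite Nj.
rewrite /nim_act; case: pickP => [i | /(_ j)]; rewrite Nj ?eqxx //.
by case: eqP.
Qed.

Lemma nim_act1 m : nim_act 1 m = m.
Proof. by have := N1 m m; rewrite nim_actE eqxx; case: eqP. Qed.

Lemma nim_actM g h m : nim_act g (nim_act h m) = nim_act (g * h) m.
Proof.
have := N_mulGG g h m (nim_act g (nim_act h m)).
rewrite (bigD1 (nim_act h m)) //= !nim_actE !eqxx big1 ?addn0 => [|i /negbTE].
  by case: eqP.
by rewrite nim_actE => ->.
Qed.

Lemma nim_actK g : cancel (nim_act g) (nim_act g^-1).
Proof. by move=> m; rewrite nim_actM mulVg nim_act1. Qed.

Lemma nim_actKV g : cancel (nim_act g^-1) (nim_act g).
Proof. by move=> m; rewrite nim_actM mulgV nim_act1. Qed.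

Lemma N_X_actl g m m' : N None (nim_act g m) m' = N None m m'.
Proof.
rewrite -[RHS](N_mulGX g) (bigD1 (nim_act g m)) //= nim_actE eqxx mul1n big1 ?addn0 //.
by move=> i /negbTE; rewrite nim_actE => ->.
Qed.

Lemma N_X_actr g m m' : N None m (nim_act g m') = N None m m'.
Proof.
rewrite -[LHS](N_mulXG g) (bigD1 m') //= nim_actE eqxx muln1 big1 ?addn0 //.
by move=> i ne; rewrite nim_actE (can_eq (nim_actK g)) eq_sym (negbTE ne) muln0.
Qed.

Lemma nim_stab_group_set m : group_set [set g | nim_act g m == m].
Proof.
apply/group_setP; split=> [|g h]; first by rewrite inE nim_act1.
by rewrite !inE -nim_actM => /eqP gm_m /eqP->; rewrite gm_m.
Qed.

Canonical nim_stab m := Group (nim_stab_group_set m).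

Lemma sum_N_Some_diag m : \sum_g N (Some g) m m = #|nim_stab m|.
Proof.
rewrite -sum1_card [RHS]big_mkcond; apply: eq_bigr => g _.
by rewrite nim_actE inE eq_sym; case: eqP.
Qed.

Hypothesis N_orbit : one_orbit N.

Lemma nim_act_transitive m m' : exists g, m' = nim_act g m.
Proof.
by have [g] := N_orbit m m'; rewrite nim_actE lt0n eqb0 negbK => /eqP->; exists g.
Qed.

Lemma N_X_const m1 m1' m2 m2' : N None m1 m1' = N None m2 m2'.
Proof.
have [g ->] := nim_act_transitive m2 m1; have [h ->] := nim_act_transitive m2' m1'.
by rewrite N_X_actl N_X_actr.
Qed.

Variable m0 : M.

Definition nim_coset m := [set g | nim_act g m0 == m].

Lemma nim_cosetE x : nim_coset (nim_act x m0) = (x *: nim_stab m0)%g.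
Proof.
apply/setP => g; rewrite inE mem_lcoset inE -nim_actM.
by apply/eqP/eqP => [-> | gx_m0]; rewrite ?nim_actK // -[in RHS]gx_m0 nim_actKV.
Qed.

Lemma nim_coset_inj : injective nim_coset.
Proof.
move=> m m' eq_mm'; have [x def_m] := nim_act_transitive m0 m.
have : x \in nim_coset m by rewrite inE -def_m.
by rewrite eq_mm' inE -def_m => /eqP.
Qed.

Lemma imset_nim_coset : nim_coset @: setT = lcosets (nim_stab m0) setT.
Proof.
apply/setP => C; apply/imsetP/lcosetsP => [[m _ ->] | [x _ ->]].
  by have [x ->] := nim_act_transitive m0 m; exists x; rewrite ?inE ?nim_cosetE.
by exists (nim_act x m0); rewrite ?inE ?nim_cosetE.
Qed.

Lemma card_nim_index : #|M| = #|setT : nim_stab m0|%g.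
Proof.
by rewrite -card_lcosets -imset_nim_coset card_imset ?cardsT //; apply: nim_coset_inj.
Qed.

Lemma N_Some_coset g m m' : N (Some g) m m' = (nim_coset m' == g *: nim_coset m)%g.
Proof.
have [x ->] := nim_act_transitive m0 m.
by rewrite nim_actE nim_actM nim_cosetE -lcosetM -nim_cosetE (inj_eq nim_coset_inj).
Qed.

Lemma nim_index_eq :
  #|setT : nim_stab m0|%g * (N None m0 m0 * N None m0 m0) =
  alpha * N None m0 m0 + #|nim_stab m0|.
Proof.
rewrite -sum_N_Some_diag -N_mulXX -card_nim_index -sum_nat_const.
by apply: eq_bigr => m _; rewrite !(N_X_const _ _ m0 m0).
Qed.

End NIMrepAction.

Section CosetNIMrep.
Variables (gT : finGroupType) (H : {group gT}) (c : nat).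
Implicit Types (g : gT) (m : cosetM H).

Lemma lcosets_lcoset g C : C \in lcosets H setT -> (g *: C)%g \in lcosets H setT.
Proof. by case/lcosetsP=> x _ ->; rewrite -lcosetM mem_lcosets mulGSid ?inE ?subsetT. Qed.

Definition coset_act g m : cosetM H :=
  exist _ (g *: val m)%g (lcosets_lcoset g (valP m)).

Lemma cosetN_SomeE g m m' : cosetN c (Some g) m m' = (m' == coset_act g m).
Proof. by rewrite /cosetN -val_eqE. Qed.

Lemma coset_act1 m : coset_act 1 m = m.
Proof. by apply: val_inj; rewrite /= lcoset1. Qed.

Lemma coset_actM g h m : coset_act g (coset_act h m) = coset_act (g * h) m.
Proof. by apply: val_inj; rewrite /= lcosetM. Qed.

Lemma coset_actK g : cancel (coset_act g) (coset_act g^-1).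
Proof. by move=> m; rewrite coset_actM mulVg coset_act1. Qed.

Lemma coset_actKV g : cancel (coset_act g^-1) (coset_act g).
Proof. by move=> m; rewrite coset_actM mulgV coset_act1. Qed.

Lemma sum_cosetN_Some_mul g (F : cosetM H -> nat) m :
  \sum_m' cosetN c (Some g) m m' * F m' = F (coset_act g m).
Proof.
under eq_bigr do rewrite cosetN_SomeE.
by rewrite (bigD1 (coset_act g m)) //= eqxx mul1n big1 ?addn0 // => m' /negbTE->.
Qed.

Lemma sum_mul_cosetN_Some g (F : cosetM H -> nat) m' :
  \sum_m F m * cosetN c (Some g) m m' = F (coset_act g^-1 m').
Proof.
under eq_bigr do rewrite cosetN_SomeE eq_sym (can2_eq (coset_actK g) (coset_actKV g)).
rewrite (bigD1 (coset_act g^-1 m')) //= eqxx muln1 big1 ?addn0 // => m /negbTE->.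
by rewrite muln0.
Qed.

Lemma sum_cosetN_Some m m' : \sum_g cosetN c (Some g) m m' = #|H|.
Proof.
case: m => _ /= /lcosetsP[x _ ->]; case: m' => _ /= /lcosetsP[y _ ->] /=.
rewrite -(card_lcoset H y) -(card_rcoset _ x^-1) -sum1_card [RHS]big_mkcond /=.
apply: eq_bigr => g _; rewrite mem_rcoset invgK -lcosetM eq_sym.
by case: lcoset_eqP => [-> | ne]; [rewrite eqxx | case: eqP => // E; case: ne].
Qed.

Lemma card_cosetM : #|cosetM H| = #|setT : H|%g.
Proof. by rewrite card_sig -card_lcosets; apply: eq_card. Qed.

Lemma cosetN_one_orbit : one_orbit (@cosetN gT H c).
Proof.
case=> _ /= /lcosetsP[x _ ->] [_ /= /lcosetsP[y _ ->]].
by exists (y * x^-1)%g; rewrite /= -lcosetM mulgKV eqxx.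
Qed.

Lemma cosetN_NIMrep (alpha : nat) :
  #|setT : H|%g * (c * c) = alpha * c + #|H| -> is_NIMrep alpha (@cosetN gT H c).
Proof.
move=> index_eq; split.
- by rewrite card_cosetM; apply: indexg_gt0.
- by move=> m m'; rewrite cosetN_SomeE coset_act1 eq_sym.
- case=> [g|] [h|] m m'; rewrite sum_ngcoef.
  + by rewrite sum_cosetN_Some_mul !cosetN_SomeE coset_actM.
  + by rewrite sum_mul_cosetN_Some.
  + by rewrite sum_cosetN_Some_mul.
  + by rewrite sum_cosetN_Some -index_eq -card_cosetM -sum_nat_const.
- case=> [g|] m m' //; rewrite /ngdual !cosetN_SomeE.
  by rewrite eq_sym (can2_eq (coset_actK g) (coset_actKV g)).
Qed.

End CosetNIMrep.

Lemma near_group_eqE (alpha c idx h : nat) : 0 < c ->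
  (alpha%:Q = c%:Q * idx%:Q - h%:Q / c%:Q)%R <-> idx * (c * c) = alpha * c + h.
Proof.
move=> c_gt0; have c_neq0 : (c%:R != 0 :> rat)%R by rewrite pnatr_eq0 -lt0n.
rewrite -!pmulrn; split=> [alphaE | index_eq].
  by apply/eqP; rewrite -(eqr_nat rat) natrD !natrM alphaE; apply/eqP; field.
have -> : (h%:R = (idx * (c * c))%:R - (alpha * c)%:R :> rat)%R.
  by rewrite index_eq natrD addrAC subrr add0r.
by rewrite !natrM; field.
Qed.

Theorem proposition3p14 (gT : finGroupType) (alpha : nat) :
  (forall (M : finType) (N : option gT -> M -> M -> nat),
     is_NIMrep alpha N -> one_orbit N ->
     exists (H : {group gT}) (c : nat),
       0 < c /\
       [/\ (* M ≅ G/H as G-sets *)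
           (exists phi : M -> {set gT},
              [/\ injective phi,
                  (forall m, phi m \in lcosets H [set: gT]),
                  (forall C, C \in lcosets H [set: gT] -> exists m, phi m = C)
                & (forall g m m', N (Some g) m m' = nat_of_bool (phi m' == (g *: phi m)%g))]),
           (forall m m', N None m m' = c),
           (alpha%:Q = c%:Q * (#|[set: gT] : H|)%g%:Q - #|H|%:Q / c%:Q)%R,
           c %| #|H|
         & #|H| <= c ^ 2 * (#|[set: gT] : H|)%g]) /\
  (forall (H : {group gT}) (c : nat),
     0 < c ->
     (alpha%:Q = c%:Q * (#|[set: gT] : H|)%g%:Q - #|H|%:Q / c%:Q)%R ->
     c %| #|H| ->
     #|H| <= c ^ 2 * (#|[set: gT] : H|)%g ->
     is_NIMrep alpha (@cosetN gT H c) /\ one_orbit (@cosetN gT H c)).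
Proof.
(* In (ii) the divisibility and the inequality follow from the equation. *)
split=> [M N NIM orbit | H c c_gt0 /(near_group_eqE _ _ _ c_gt0) index_eq _ _]; last first.
  by split; [apply: cosetN_NIMrep | apply: cosetN_one_orbit].
have /card_gt0P[m0 _] : 0 < #|M| by case: NIM.
have index_eq := nim_index_eq NIM orbit m0.
set c := N None m0 m0 in index_eq.
have c_gt0 : 0 < c.
  rewrite lt0n; apply/eqP => c0; move: index_eq (cardG_gt0 (nim_stab NIM m0)).
  by rewrite c0 !muln0 add0n => <-.
exists (nim_stab NIM m0), c; split=> //; split.
- exists (nim_coset N m0); split; first exact: nim_coset_inj NIM orbit m0.
  + by move=> m; rewrite -(imset_nim_coset NIM orbit) imset_f.
  + by move=> C; rewrite -(imset_nim_coset NIM orbit) => /imsetP[m _ ->]; exists m.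
  + exact: N_Some_coset NIM orbit m0.
- by move=> m m'; apply: (N_X_const NIM orbit m m' m0 m0).
- exact/near_group_eqE.
- by rewrite -(dvdn_addr _ (dvdn_mull alpha (dvdnn c))) -index_eq dvdn_mull ?dvdn_mulr.
- by rewrite mulnC -mulnn index_eq leq_addl.
Qed.
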